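(* Let voters (and their proposals) be points of $[0,1]$, distributed according to the uniform distribution, with density $f(x)=1$ on $[0,1]$. Each voter prefers, between two proposals, the one closer to its own position. Consider one round of Triadic voting: three voters $X_1,X_2,X_3$ are drawn independently from the uniform distribution on $[0,1]$. Each voter votes for whichever of the other two proposals is closer to it, and the proposal receiving the most votes wins. Let $g_{\text{Triadic}}(x)$ denote the probability density of the winning proposal's position. Consider one round of Hot-or-Not voting: two candidate proposals $X, Y$ and one voter $Z$ are drawn independently from the uniform distribution on $[0,1]$. The voter $Z$ votes for whichever of $X,Y$ is closer to $Z$, and that proposal wins. Let $g_{\text{Hot-or-Not}}(x)$ denote the probability density of the winning proposal's position. Then, for $x\in[0,1]$, \[ g_{\text{Triadic}}(x)=6x(1-x), \qquad g_{\text{Hot-or-Not}}(x)=3x(1-x)+\tfrac12 . \] In particular, \[ g_{\text{Hot-or-Not}}(x)=\tfrac12 g_{\text{Triadic}}(x)+\tfrac12 f(x). \]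
   Context: This is a one-dimensional (single-peaked) model of proposals: each voter's opinion is a real number in $[0,1]$, and each voter's proposal is that same number. A voter at position $z$ prefers proposal $a$ to proposal $b$ if $|z-a|<|z-b|$. Ties occur with probability zero. *)

From HB Require Import structures.
From mathcomp Require Import all_boot all_order all_algebra.
From mathcomp Require Import all_classical all_reals all_analysis.
Set Implicit Arguments. Unset Strict Implicit. Unset Printing Implicit Defensive.
Import Order.TTheory GRing.Theory Num.Theory.
Local Open Scope classical_set_scope.
Local Open Scope ring_scope.

Section Voting.
Variable R : realType.

Definition unif01 := uniform_prob (@ltr01 R).

Definition unif3 := ((unif01 \x unif01) \x unif01)%E.

(** Each voter votes for whichever
    of the other two proposals is closer to it (ties, which have probability
    zero, are resolved in favour of the lower index).  The proposal with the
    most votes wins (ties in vote counts resolved in favour of the lower index;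
    with no distance ties they never occur). *)
Definition triadic_winner (p : R * R * R) : R :=
  let: (x1, x2, x3) := p in
  let v1_for2 := `|x1 - x2| <= `|x1 - x3| in
  let v2_for1 := `|x2 - x1| <= `|x2 - x3| in
  let v3_for1 := `|x3 - x1| <= `|x3 - x2| in
  let n1 := (v2_for1 : nat) + (v3_for1 : nat) in
  let n2 := (v1_for2 : nat) + (~~ v3_for1 : nat) in
  let n3 := (~~ v1_for2 : nat) + (~~ v2_for1 : nat) in
  if ((n2 <= n1)%N && (n3 <= n1)%N) then x1
  else if (n3 <= n2)%N then x2 else x3.

(** Hot-or-Not voting: candidates x, y and voter z; z votes for the closer
    candidate, which wins (tie, of probability zero, resolved in favour of x). *)
Definition hotornot_winner (p : R * R * R) : R :=
  let: (x, y, z) := p in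
  if `|z - x| <= `|z - y| then x else y.

End Voting.

From HB Require Import structures.
From mathcomp Require Import all_boot all_order all_algebra.
From mathcomp Require Import all_classical all_reals all_analysis.
From mathcomp Require Import measurable_realfun.
From mathcomp Require Import lra ring.
Set Implicit Arguments. Unset Strict Implicit. Unset Printing Implicit Defensive.
Import Order.TTheory GRing.Theory Num.Theory.
Import numFieldNormedType.Exports.
Local Open Scope classical_set_scope.
Local Open Scope ring_scope.

(* Both laws are identified through their distribution functions, which
   determine a probability measure on the line; here both are supported by
   [0, 1].  Conditioning on the first two coordinates (Fubini), the winner is
   at most t with probability 1 if both are at most t, 0 if neither is, and
   otherwise t for Triadic voting (the winner is the median of the three
   points) and (x + y) / 2 for Hot-or-Not (the voters preferring the lower
   candidate are those below the midpoint).  Integrating these piecewise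
   affine functions twice gives 3t^2 - 2t^3 and t/2 + 3t^2/2 - t^3, the
   primitives of the two densities. *)

Section polynomial_integrals.
Variable R : realType.
Local Notation mu := (@lebesgue_measure R).

Lemma integral_itv_deriv_horner (p : {poly R}) (a b : R) : a <= b ->
  (\int[mu]_(x in `[a, b]) (p^`().[x])%:E = (p.[b] - p.[a])%:E)%E.
Proof.
rewrite le_eqVlt => /predU1P[<-|ab]; first by rewrite set_itv1 integral_set1 subrr.
rewrite EFinB; apply: (@continuous_FTC2 _ (horner p^`()) (horner p)) => //.
- by apply/continuous_subspaceT => ?; exact: continuous_horner.
- split.
  + by move=> x _; exact: derivable_horner.
  + by apply: cvg_at_right_filter; exact: continuous_horner.
  + by apply: cvg_at_left_filter; exact: continuous_horner.
- by move=> x _; rewrite derivE.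
Qed.

Lemma integral_itv_quadratic (f : R -> \bar R) (c0 c1 c2 a b : R) : a <= b ->
  (forall x, a <= x <= b -> f x = (c0 + c1 * x + c2 * x ^+ 2)%:E) ->
  (\int[mu]_(x in `[a, b]) f x =
   (c0 * (b - a) + c1 * (b ^+ 2 - a ^+ 2) / 2 + c2 * (b ^+ 3 - a ^+ 3) / 3)%:E)%E.
Proof.
move=> ab fE; pose p : {poly R} := c0 *: 'X + (c1 / 2) *: 'X^2 + (c2 / 3) *: 'X^3.
have pE x : p.[x] = c0 * x + c1 / 2 * x ^+ 2 + c2 / 3 * x ^+ 3.
  by rewrite !(hornerD, hornerZ, hornerX, hornerXn).
have p'E x : p^`().[x] = c0 + c1 * x + c2 * x ^+ 2.
  rewrite !(derivD, derivZ, derivX, derivXn).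
  rewrite !(hornerD, hornerZ, hornerC, hornerMn, hornerXn).
  by rewrite /= expr1; field.
transitivity (\int[mu]_(x in `[a, b]) (p^`().[x])%:E)%E.
  by apply: eq_integral => x; rewrite inE /= in_itv /= => /fE ->; rewrite p'E.
by rewrite integral_itv_deriv_horner // !pE; congr EFin; field.
Qed.

Lemma integral_itv_oc_quadratic (f : R -> \bar R) (c0 c1 c2 a b : R) : a <= b ->
  (forall x, a < x <= b -> f x = (c0 + c1 * x + c2 * x ^+ 2)%:E) ->
  (\int[mu]_(x in `]a, b]) f x =
   (c0 * (b - a) + c1 * (b ^+ 2 - a ^+ 2) / 2 + c2 * (b ^+ 3 - a ^+ 3) / 3)%:E)%E.
Proof.
move=> ab fE.
transitivity (\int[mu]_(x in `]a, b]) (c0 + c1 * x + c2 * x ^+ 2)%:E)%E.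
  by apply: eq_integral => x; rewrite inE /= in_itv /= => /fE.
rewrite integral_itv_obnd_cbnd; first exact: integral_itv_quadratic.
apply/measurable_EFinP; apply: measurable_funD; first apply: measurable_funD.
- exact: measurable_cst.
- exact: mulrl_measurable.
- by apply: measurable_funM => //; exact: exprn_measurable.
Qed.

Lemma integral_itv_split (f : R -> \bar R) (a t b : R) : a <= t <= b ->
  measurable_fun `[a, b] f -> (forall x, a <= x <= b -> (0 <= f x)%E) ->
  (\int[mu]_(x in `[a, b]) f x =
   \int[mu]_(x in `[a, t]) f x + \int[mu]_(x in `]t, b]) f x)%E.
Proof.
move=> /andP[a_le_t t_le_b] mf f0; rewrite -ge0_integral_setU //.
- by rewrite -itv_bndbnd_setU // bnd_simp.
- by rewrite -itv_bndbnd_setU // bnd_simp.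
- by move=> x; rewrite -itv_bndbnd_setU ?bnd_simp //= in_itv /=; exact: f0.
- apply/disj_setPS => x [] /=; rewrite !in_itv /= => /andP[_ xt] /andP[+ _].
  by rewrite ltNge xt.
Qed.

Lemma integral_itv_piecewise_affine (f : R -> \bar R) (a t b a0 a1 b0 b1 : R) :
  a <= t <= b -> measurable_fun `[a, b] f -> (forall x, a <= x <= b -> (0 <= f x)%E) ->
  (forall x, a <= x <= t -> f x = (a0 + a1 * x)%:E) ->
  (forall x, t < x <= b -> f x = (b0 + b1 * x)%:E) ->
  (\int[mu]_(x in `[a, b]) f x =
   (a0 * (t - a) + a1 * (t ^+ 2 - a ^+ 2) / 2 +
    b0 * (b - t) + b1 * (b ^+ 2 - t ^+ 2) / 2)%:E)%E.
Proof.
move=> atb mf f0 fa fb; have /andP[a_le_t t_le_b] := atb.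
rewrite (integral_itv_split atb) //.
rewrite (integral_itv_quadratic (c0 := a0) (c1 := a1) (c2 := 0)) // => [|x /fa ->].
  rewrite (integral_itv_oc_quadratic (c0 := b0) (c1 := b1) (c2 := 0)) // => [|x /fb ->].
    by rewrite -EFinD; congr EFin; field.
  by rewrite mul0r addr0.
by rewrite mul0r addr0.
Qed.

End polynomial_integrals.

Arguments integral_itv_quadratic {R f} c0 c1 c2 {a b}.
Arguments integral_itv_piecewise_affine {R f a t b} a0 a1 b0 b1.

Section uniform01.
Variable R : realType.
Local Notation mu := (@lebesgue_measure R).

Lemma unif01E (A : set R) : measurable A -> @unif01 R A = mu (A `&` `[0, 1]).
Proof.
move=> mA; rewrite /unif01 /uniform_prob integral_uniform_pdf.
rewrite (eq_integral (cst 1%:E)) ?integral_cst ?mul1e //; first exact: measurableI.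
move=> x; rewrite inE => -[_]; rewrite /= in_itv /= /uniform_pdf => ->.
by rewrite subr0 invr1.
Qed.

Lemma unif01_ray (t : R) : 0 <= t <= 1 -> @unif01 R `]-oo, t] = t%:E.
Proof.
move=> /andP[t0 t1]; rewrite unif01E // -set_itvI lebesgue_measure_itv /=.
rewrite meetEtotal (min_idPl t1) lte_fin -EFinD subr0.
by case: ltgtP t0 => // <-.
Qed.

Lemma unif01_ray_open (t : R) : 0 <= t <= 1 -> @unif01 R `]-oo, t[ = t%:E.
Proof.
move=> /andP[t0 t1]; rewrite unif01E // -set_itvI lebesgue_measure_itv /=.
rewrite meetEtotal (min_idPl t1) lte_fin -EFinD subr0.
by case: ltgtP t0 => // <-.
Qed.

End uniform01.

Section probability_on_the_line.
Variable R : realType.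

Lemma probability_eq_rays (P Q : probability R R) :
  (forall t, P `]-oo, t]%classic = Q `]-oo, t]%classic) ->
  forall A, measurable A -> P A = Q A.
Proof.
move=> PQ; apply: (measure_unique (@ocitv R) (fun n : nat => `]-(n%:R), n%:R]%classic)).
- by [].
- exact: ocitvI.
- by move=> n; exact: is_ocitv.
- apply/seteqP; split=> // x _; exists (Num.truncn `|x|).+1 => //=; rewrite in_itv /=.
  by have := truncnS_gt `|x|; rewrite ltr_norml => /andP[-> /ltW ->].
- move=> _ [[a b] _ <-] /=.
  have -> : `]a, b]%classic = `]-oo, b]%classic `\` `]-oo, a]%classic :> set R.
    apply/seteqP; split=> x /=; rewrite !in_itv /= ?andbT.
      by move=> /andP[ax xb]; split => //; apply/negP; rewrite -ltNge.
    by move=> [xb /negP]; rewrite -ltNge => ->.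
  have fin (m : probability R R) A : measurable A -> (m A < +oo)%E.
    by move=> mA; rewrite (le_lt_trans (probability_le1 _ mA)) ?ltry.
  rewrite !measureD ?fin //.
  have -> : `]-oo, b]%classic `&` `]-oo, a]%classic = `]-oo, Num.min b a]%classic :> set R.
    apply/seteqP; split=> x /=; rewrite !in_itv /= le_min; first by move=> [-> ->].
    by move=> /andP[].
  by congr (_ - _)%E; exact: PQ.
- by move=> n; rewrite (le_lt_trans (probability_le1 _ _)) ?ltry.
Qed.

Lemma probability_eq_rays01 (P Q : probability R R) :
  P `]-oo, 0]%classic = 0%E -> P `]-oo, 1]%classic = 1%E ->
  (forall t, 0 <= t <= 1 -> P `]-oo, t]%classic = Q `]-oo, t]%classic) ->
  forall A, measurable A -> P A = Q A.
Proof.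
move=> P0 P1 PQ; apply: probability_eq_rays => t.
have ray_sub (s u : R) : s <= u -> `]-oo, s]%classic `<=` `]-oo, u]%classic.
  by move=> su x /=; rewrite !in_itv /= => /le_trans; apply.
have [t0|t0] := ltP t 0.
  have Q0 : Q `]-oo, 0]%classic = 0%E by rewrite -PQ ?lexx ?ler01.
  by rewrite !(subset_measure0 _ _ (ray_sub t 0 (ltW t0))).
have [t1|t1] := leP t 1; first by rewrite PQ ?t0.
have Q1 : Q `]-oo, 1]%classic = 1%E by rewrite -PQ ?lexx ?ler01.
have ray1 (m : probability R R) : m `]-oo, 1]%classic = 1%E -> m `]-oo, t]%classic = 1%E.
  move=> m1; apply/eqP; rewrite eq_le probability_le1 //= -m1.
  by apply: le_measure; rewrite ?inE //; apply: ray_sub; exact: ltW.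
by rewrite !ray1.
Qed.

End probability_on_the_line.

Section density01.
Variable R : realType.
Local Notation mu := (@lebesgue_measure R).
Variable g : R -> R.
Hypothesis mg : measurable_fun (`[0, 1] : set R) g.
Hypothesis g_ge0 : forall x, 0 <= x <= 1 -> 0 <= g x.
Hypothesis g_int1 : (\int[mu]_(x in `[0%R, 1%R]) (g x)%:E = 1)%E.

Definition density01 (A : set R) : \bar R :=
  (\int[mu]_(x in A `&` `[0%R, 1%R]) (g x)%:E)%E.

Let density01_0 : density01 set0 = 0%E.
Proof. by rewrite /density01 set0I integral_set0. Qed.

Let g_ge0_itv : forall x, `[0, 1]%classic x -> (0 <= (g x)%:E)%E.
Proof. by move=> x; rewrite /= in_itv /= => /g_ge0; rewrite lee_fin. Qed.

Let density01_ge0 A : (0 <= density01 A)%E.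
Proof. by apply: integral_ge0 => x [_]; exact: g_ge0_itv. Qed.

Let density01_sigma_additive : semi_sigma_additive density01.
Proof.
move=> F mF tF mUF; rewrite /density01 setI_bigcupl; apply: cvg_toP.
  apply: ereal_nondecreasing_is_cvgn => m n mn.
  by apply: lee_sum_nneg_natr => // k _ _; exact: density01_ge0.
rewrite ge0_integral_bigcup //=.
- by move=> k; apply: measurableI; [exact: mF|exact: measurable_itv].
- by apply/measurable_EFinP; apply: measurable_funS mg => // x [k _ []].
- by move=> x [k _ [_]]; exact: g_ge0_itv.
- by move=> i j _ _ [x [[? _] [? _]]]; apply: tF => //; exists x.
Qed.

HB.instance Definition _ := isMeasure.Build _ _ _ density01
  density01_0 density01_ge0 density01_sigma_additive.

Let density01_setT : density01 setT = 1%E.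
Proof. by rewrite /density01 setTI. Qed.

HB.instance Definition _ := @Measure_isProbability.Build _ _ R density01 density01_setT.

Lemma law_density01 d (T : measurableType d) (Q : probability T R) (X : T -> R) :
  measurable_fun setT X ->
  (forall t, 0 <= t <= 1 ->
    Q (X @^-1` `]-oo, t]) = (\int[mu]_(x in `[0%R, t]) (g x)%:E)%E) ->
  forall A, measurable A -> Q (X @^-1` A) = density01 A.
Proof.
move=> mX cdf; pose Xm : {mfun T >-> R} := HB.pack X (isMeasurableFun.Build _ _ _ _ X mX).
pose P : probability R R := distribution Q Xm.
have lawE A : P A = Q (X @^-1` A) by [].
apply: (@probability_eq_rays01 _ P).
- by rewrite lawE cdf ?lexx ?ler01 // set_itv1 integral_set1.
- by rewrite lawE cdf ?lexx ?ler01.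
move=> t /andP[t0 t1]; rewrite lawE cdf ?t0 // /density01.
congr (integral _ _ _); apply/seteqP; split=> x /=; rewrite !in_itv /=.
  by move=> /andP[-> xt]; split=> //; rewrite (le_trans xt).
by move=> [xt /andP[-> _]].
Qed.

End density01.

Section quadratic_density.
Variable R : realType.
Local Notation mu := (@lebesgue_measure R).

Lemma law_quadratic_density01 d (T : measurableType d) (Q : probability T R)
    (X : T -> R) (g : R -> R) (c0 c1 c2 : R) :
  measurable_fun setT X ->
  (forall x, g x = c0 + c1 * x + c2 * x ^+ 2) ->
  (forall x, 0 <= x <= 1 -> 0 <= g x) ->
  c0 + c1 / 2 + c2 / 3 = 1 ->
  (forall t, 0 <= t <= 1 ->
    Q (X @^-1` `]-oo, t]) = (c0 * t + c1 * t ^+ 2 / 2 + c2 * t ^+ 3 / 3)%:E) ->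
  forall A, measurable A ->
    Q (X @^-1` A) = (\int[mu]_(x in A `&` `[0%R, 1%R]) (g x)%:E)%E.
Proof.
move=> mX gE g0 mass1 cdf.
have intg t : 0 <= t ->
    (\int[mu]_(x in `[0%R, t]) (g x)%:E =
     (c0 * t + c1 * t ^+ 2 / 2 + c2 * t ^+ 3 / 3)%:E)%E.
  move=> t0; rewrite (integral_itv_quadratic c0 c1 c2) // => [|x _]; last by rewrite gE.
  by congr EFin; ring.
have mg : measurable_fun (`[0, 1] : set R) g.
  rewrite (funext gE); apply: measurable_funD; first apply: measurable_funD.
  - exact: measurable_cst.
  - exact: mulrl_measurable.
  - by apply: measurable_funM => //; exact: exprn_measurable.
have int1 : (\int[mu]_(x in `[0%R, 1%R]) (g x)%:E = 1)%E.
  by rewrite intg // !expr1n !mulr1 mass1.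
apply: (law_density01 mg g0 int1 mX) => t t01; rewrite cdf // intg //.
by case/andP: t01.
Qed.

End quadratic_density.

Arguments law_quadratic_density01 {R d T} Q {X g} c0 c1 c2.

Section three_uniforms.
Variable R : realType.
Local Notation mu := (@lebesgue_measure R).

Lemma integral_unif01 (f : R -> \bar R) :
  measurable_fun setT f -> (forall x, 0 <= f x)%E ->
  (\int[@unif01 R]_x f x = \int[mu]_(x in `[0%R, 1%R]) f x)%E.
Proof. by move=> mf f0; rewrite integral_uniform //= subr0 invr1 mul1e. Qed.

Section conditioning.
Variable S : set (R * R * R).
Hypothesis mS : measurable S.

Let mphi := measurable_fun_xsection (@unif01 R) mS.

Lemma fubini_F_unif01 x :
  fubini_F (@unif01 R) (@unif01 R \o xsection S) x =
  (\int[mu]_(y in `[0%R, 1%R]) @unif01 R (xsection S (x, y)))%E.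
Proof. by rewrite /fubini_F integral_unif01 //; exact: (measurable_fun_pair2 x mphi). Qed.

Lemma measurable_integral_xsection :
  measurable_fun setT
    (fun x => \int[mu]_(y in `[0%R, 1%R]) @unif01 R (xsection S (x, y)))%E.
Proof.
rewrite -(funext fubini_F_unif01); exact: measurable_fun_fubini_tonelli_F.
Qed.

Lemma unif3_xsection :
  @unif3 R S = (\int[mu]_(x in `[0%R, 1%R]) \int[mu]_(y in `[0%R, 1%R])
                   @unif01 R (xsection S (x, y)))%E.
Proof.
rewrite /unif3 /= /product_measure1 /= fubini_tonelli1 //= integral_unif01.
- by apply: eq_integral => x _; exact: fubini_F_unif01.
- exact: measurable_fun_fubini_tonelli_F.
- by move=> x; apply: integral_ge0.
Qed.

End conditioning.

Lemma measurable_fst3 : measurable_fun [set: R * R * R] (fun p => p.1.1).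
Proof. exact: measurableT_comp measurable_fst measurable_fst. Qed.

Lemma measurable_snd3 : measurable_fun [set: R * R * R] (fun p => p.1.2).
Proof. exact: measurableT_comp measurable_snd measurable_fst. Qed.

Lemma measurable_thd3 : measurable_fun [set: R * R * R] (fun p => p.2).
Proof. exact: measurable_snd. Qed.

End three_uniforms.

Section midpoint.
Variable R : realFieldType.

Lemma ler_dist_mid (x y z : R) : x < y -> (`|z - x| <= `|z - y|) = (z <= (x + y) / 2).
Proof.
move=> xy; rewrite -ler_sqr ?nnegrE // !real_normK ?num_real //.
by apply/idP/idP => h; nra.
Qed.

Lemma ltr_dist_mid (x y z : R) : x < y -> (`|z - x| < `|z - y|) = (z < (x + y) / 2).
Proof.
move=> xy; rewrite -ltr_sqr ?nnegrE // !real_normK ?num_real //.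
by apply/idP/idP => h; nra.
Qed.

End midpoint.

Section triadic.
Variable R : realType.
Local Notation mu := (@lebesgue_measure R).

Definition median3 (x y z : R) := Num.max (Num.min x y) (Num.min (Num.max x y) z).

Lemma le_median3 (x y z t : R) : (median3 x y z <= t) =
  [|| (x <= t) && (y <= t), (x <= t) && (z <= t) | (y <= t) && (z <= t)].
Proof.
rewrite /median3 ge_max !ge_min ge_max.
by case: (x <= t); case: (y <= t); case: (z <= t).
Qed.

Lemma triadic_winnerE : @triadic_winner R = fun p => median3 p.1.1 p.1.2 p.2.
Proof.
apply/funext => -[[x y] z].
rewrite /triadic_winner /median3 (distrC y x) (distrC z x) (distrC z y).
case: (lerP x y) => ?; case: (lerP x z) => ?; case: (lerP y z) => ?;
repeat match goal with |- context [(?a <= ?b)%R] => case: (lerP a b) => ? /= end;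
try done;
repeat match goal with |- context [Num.max ?a ?b] => case: (lerP a b) => ? /= end;
try done; lra.
Qed.

Lemma measurable_triadic_winner : measurable_fun setT (@triadic_winner R).
Proof.
rewrite triadic_winnerE.
apply: measurable_maxr; apply: measurable_minr; try apply: measurable_maxr;
  (exact: measurable_fst3 || exact: measurable_snd3 || exact: measurable_thd3).
Qed.

Lemma triadic_section (t x y : R) : 0 <= t <= 1 ->
  @unif01 R (xsection (@triadic_winner R @^-1` `]-oo, t]) (x, y)) =
  (if x <= t then (if y <= t then 1 else t) else (if y <= t then t else 0))%:E.
Proof.
move=> t01; rewrite triadic_winnerE xsectionE.
have -> : (fun z => (x, y, z)) @^-1` ((fun p => median3 p.1.1 p.1.2 p.2) @^-1` `]-oo, t]) =
          [set z | [|| (x <= t) && (y <= t), (x <= t) && (z <= t) | (y <= t) && (z <= t)]].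
  by apply/seteqP; split=> z; rewrite /= in_itv /= le_median3.
case: (x <= t); case: (y <= t) => /=.
- by rewrite -(probability_setT (@unif01 R)); congr unif01; apply/seteqP.
- by rewrite -unif01_ray //; congr unif01; apply/seteqP; split=> z;
    rewrite /= in_itv /= orbF.
- by rewrite -unif01_ray //; congr unif01; apply/seteqP; split=> z;
    rewrite /= in_itv.
- rewrite (_ : [set _ | false] = set0 :> set R); first exact: measure0.
  by apply/seteqP; split.
Qed.

Lemma measurable_triadic_le (t : R) : measurable (@triadic_winner R @^-1` `]-oo, t]).
Proof.
by rewrite -[X in measurable X]setTI; apply: measurable_triadic_winner.
Qed.

Lemma integral_triadic_section (t x : R) : 0 <= t <= 1 ->
  (\int[mu]_(y in `[0%R, 1%R])
      @unif01 R (xsection (@triadic_winner R @^-1` `]-oo, t]) (x, y)) =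
   (if x <= t then t * (2 - t) else t ^+ 2)%:E)%E.
Proof.
move=> t01; rewrite (integral_itv_piecewise_affine (if x <= t then 1 else t) 0
    (if x <= t then t else 0) 0 t01).
- by congr EFin; case: ifP => _; ring.
- apply: measurable_funTS.
  exact: measurable_fun_pair2 x
    (measurable_fun_xsection (@unif01 R) (measurable_triadic_le t)).
- by move=> y _; exact: measure_ge0.
- by move=> y /andP[_ yt]; rewrite triadic_section // yt mul0r addr0.
- by move=> y /andP[/lt_geF ty _]; rewrite triadic_section // ty mul0r addr0.
Qed.

Lemma triadic_cdf (t : R) : 0 <= t <= 1 ->
  @unif3 R (@triadic_winner R @^-1` `]-oo, t]) = (3 * t ^+ 2 - 2 * t ^+ 3)%:E.
Proof.
move=> t01; rewrite unif3_xsection; last exact: measurable_triadic_le.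
rewrite (integral_itv_piecewise_affine (t * (2 - t)) 0 (t ^+ 2) 0 t01).
- by congr EFin; ring.
- exact: measurable_funTS (measurable_integral_xsection (measurable_triadic_le t)).
- by move=> x _; apply: integral_ge0 => y _; exact: measure_ge0.
- by move=> x /andP[_ xt]; rewrite integral_triadic_section // xt mul0r addr0.
- by move=> x /andP[/lt_geF tx _]; rewrite integral_triadic_section // tx mul0r addr0.
Qed.

End triadic.

Section hotornot.
Variable R : realType.
Local Notation mu := (@lebesgue_measure R).

Lemma measurable_hotornot_winner : measurable_fun setT (@hotornot_winner R).
Proof.
rewrite (_ : @hotornot_winner R =
    fun p => if `|p.2 - p.1.1| <= `|p.2 - p.1.2| then p.1.1 else p.1.2); last first.
  by apply/funext => -[[x y] z].
apply: measurable_fun_if => //.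
- apply: measurable_fun_ler; apply: measurableT_comp => //;
  apply: measurable_funB;
  (exact: measurable_fst3 || exact: measurable_snd3 || exact: measurable_thd3).
- by apply: measurable_funTS; exact: measurable_fst3.
- by apply: measurable_funTS; exact: measurable_snd3.
Qed.

Lemma measurable_hotornot_le (t : R) : measurable (@hotornot_winner R @^-1` `]-oo, t]).
Proof.
by rewrite -[X in measurable X]setTI; apply: measurable_hotornot_winner.
Qed.

Lemma hotornot_section (t x y : R) : 0 <= x <= 1 -> 0 <= y <= 1 ->
  @unif01 R (xsection (@hotornot_winner R @^-1` `]-oo, t]) (x, y)) =
  (if x <= t then (if y <= t then 1 else (x + y) / 2)
   else (if y <= t then (x + y) / 2 else 0))%:E.
Proof.
move=> /andP[x0 x1] /andP[y0 y1].
have mid01 : 0 <= (x + y) / 2 <= 1 by apply/andP; split; lra.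
have -> : xsection (@hotornot_winner R @^-1` `]-oo, t]) (x, y) =
          [set z | (if `|z - x| <= `|z - y| then x else y) <= t].
  by apply/seteqP; split=> z; rewrite /xsection /= inE /= in_itv.
case: (lerP x t) => xt; case: (lerP y t) => yt.
- rewrite -(probability_setT (@unif01 R)); congr unif01.
  by apply/seteqP; split=> z //= _; case: ifP.
- rewrite -unif01_ray // -[X in _ = @unif01 R X]/[set z | z <= (x + y) / 2].
  congr unif01; apply: eq_set => z; rewrite -ler_dist_mid ?(le_lt_trans xt yt) //.
  by case: ifP => d; rewrite ?xt ?d // leNgt yt.
- rewrite -unif01_ray_open // -[X in _ = @unif01 R X]/[set z | z < (x + y) / 2].
  congr unif01; apply: eq_set => z.
  rewrite [x + y]addrC -ltr_dist_mid ?(le_lt_trans yt xt) //.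
  by rewrite ltNge; case: ifP => d; rewrite ?yt // leNgt xt.
- have -> : [set z | (if `|z - x| <= `|z - y| then x else y) <= t] = set0 :> set R.
    by apply/seteqP; split=> z //=; case: ifP => _ ?; lra.
  exact: measure0.
Qed.

Lemma integral_hotornot_section (t x : R) : 0 <= t <= 1 -> 0 <= x <= 1 ->
  (\int[mu]_(y in `[0%R, 1%R])
      @unif01 R (xsection (@hotornot_winner R @^-1` `]-oo, t]) (x, y)) =
   (if x <= t then t + (1 - t ^+ 2) / 4 + (1 - t) / 2 * x
    else t ^+ 2 / 4 + t / 2 * x)%:E)%E.
Proof.
move=> t01 x01; have /andP[t0 t1] := t01.
rewrite (integral_itv_piecewise_affine (if x <= t then 1 else x / 2)
  (if x <= t then 0 else 1 / 2) (if x <= t then x / 2 else 0)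
  (if x <= t then 1 / 2 else 0) t01).
- by congr EFin; case: ifP => _; field.
- apply: measurable_funTS.
  exact: measurable_fun_pair2 x
    (measurable_fun_xsection (@unif01 R) (measurable_hotornot_le t)).
- by move=> y _; exact: measure_ge0.
- move=> y /andP[y0 yt]; rewrite hotornot_section ?y0 ?(le_trans yt t1) // yt.
  by congr EFin; case: ifP => _; field.
- move=> y /andP[ty y1].
  rewrite hotornot_section ?y1 ?(le_trans t0 (ltW ty)) // [y <= t]leNgt ty.
  by congr EFin; case: ifP => _; field.
Qed.

Lemma hotornot_cdf (t : R) : 0 <= t <= 1 ->
  @unif3 R (@hotornot_winner R @^-1` `]-oo, t]) =
  (2^-1 * t + 3 / 2 * t ^+ 2 - t ^+ 3)%:E.
Proof.
move=> t01; have /andP[t0 t1] := t01.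
rewrite (unif3_xsection (measurable_hotornot_le t)).
rewrite (integral_itv_piecewise_affine (t + (1 - t ^+ 2) / 4) ((1 - t) / 2)
  (t ^+ 2 / 4) (t / 2) t01).
- by congr EFin; field.
- exact: measurable_funTS (measurable_integral_xsection (measurable_hotornot_le t)).
- by move=> x _; apply: integral_ge0 => y _; exact: measure_ge0.
- by move=> x /andP[x0 xt]; rewrite integral_hotornot_section ?x0 ?(le_trans xt t1) // xt.
- move=> x /andP[tx x1].
  by rewrite integral_hotornot_section ?x1 ?(le_trans t0 (ltW tx)) // [x <= t]leNgt tx.
Qed.

End hotornot.

Theorem theorem1 (R : realType) :
  (forall A : set R, measurable A ->
     @unif3 R (triadic_winner (R:=R) @^-1` A) =
     (\int[lebesgue_measure]_(x in A `&` `[0%R, 1%R]) (6 * x * (1 - x))%:E)%E) /\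
  (forall A : set R, measurable A ->
     @unif3 R (hotornot_winner (R:=R) @^-1` A) =
     (\int[lebesgue_measure]_(x in A `&` `[0%R, 1%R]) (3 * x * (1 - x) + 2^-1)%:E)%E) /\
  (forall x : R, 0 <= x <= 1 ->
     3 * x * (1 - x) + 2^-1 = 2^-1 * (6 * x * (1 - x)) + 2^-1 * uniform_pdf 0 1 x).
Proof.
split.
  apply: (law_quadratic_density01 (@unif3 R) 0 6 (-6) (@measurable_triadic_winner R)).
  - by move=> x; ring.
  - by move=> x /andP[x0 x1]; rewrite !mulr_ge0 // subr_ge0.
  - by field.
  - by move=> t t01; apply: eq_trans (triadic_cdf t01) _; congr EFin; field.
split.
  apply: (law_quadratic_density01 (@unif3 R) 2^-1 3 (-3) (@measurable_hotornot_winner R)).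
  - by move=> x; ring.
  - by move=> x /andP[x0 x1]; rewrite addr_ge0 ?invr_ge0 // !mulr_ge0 // subr_ge0.
  - by field.
  - by move=> t t01; apply: eq_trans (hotornot_cdf t01) _; congr EFin; field.
by move=> x x01; rewrite /uniform_pdf x01 subr0 invr1; field.
Qed.
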